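(* For positive integers $r$ and integers $0\le d\le n$, let $\mathrm{Sch}_{n,d}^r$ be the set of lattice paths from $(0,n)$ to $(rn,0)$ using steps $(0,-1)$ (down), $(1,0)$ (right) and $(r,-1)$ (diagonal), never passing strictly above the line through $(0,n)$ and $(rn,0)$, and having exactly $n-d$ diagonal steps. For $\alpha\in\mathrm{Sch}_{n,d}^r$ and $1\le i\le n$, let $a_i(\alpha)$ be the $x$-coordinate of the starting point of the unique down or diagonal step of $\alpha$ going from height $n-i+1$ to height $n-i$, and set $\mathrm{aire}(\alpha)=\sum_{i=1}^n\big(r(i-1)-a_i(\alpha)\big)$. Then there is no family of functions $\mathrm{dinv}=\mathrm{dinv}_{n,d}^r:\mathrm{Sch}_{n,d}^r\to\mathbb{Z}_{\ge 0}$ (one for each $r\ge1$ and each $0\le d\le n$) such that for all $r,n,d$ both of the following hold: (i) the polynomial $S_{n,d}^r(q,t)=\sum_{\alpha\in\mathrm{Sch}_{n,d}^r}q^{\mathrm{aire}(\alpha)}t^{\mathrm{dinv}(\alpha)}$ is symmetric, i.e. $S_{n,d}^r(q,t)=S_{n,d}^r(t,q)$; (ii) there is an integer $w$ (possibly depending on $n,d,r$) with $$q^{w}\sum_{\alpha\in\mathrm{Sch}_{n,d}^r}q^{\mathrm{aire}(\alpha)-\mathrm{dinv}(\alpha)}=\frac{1}{[dr+1]_q}\binom{n}{d}_q\binom{dr+n}{n}_q .$$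
   Context: $q$-analogues: $[m]_q=1+q+\cdots+q^{m-1}$, $[m]!_q=[1]_q[2]_q\cdots[m]_q$, $\binom{m}{k}_q=\frac{[m]!_q}{[k]!_q[m-k]!_q}$. The quantity $r(i-1)-a_i(\alpha)$ is the area of row $i$ of $\alpha$ (the number of unit cells in row $i$ between the path and the line through $(0,n)$ and $(rn,0)$). *)

From HB Require Import structures.
From mathcomp Require Import all_boot all_order all_algebra.
From mathcomp Require Import fraction.
Set Implicit Arguments. Unset Strict Implicit. Unset Printing Implicit Defensive.
Import Order.TTheory GRing.Theory Num.Theory.
Local Open Scope ring_scope.

Definition Dn : 'I_3 := @Ordinal 3 0 isT.   (* down      (0,-1) *)
Definition Rt : 'I_3 := @Ordinal 3 1 isT.   (* right     (1, 0) *)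
Definition Dg : 'I_3 := @Ordinal 3 2 isT.   (* diagonal  (r,-1) *)

Definition nD (s : seq 'I_3) : nat := count (pred1 Dn) s.
Definition nR (s : seq 'I_3) : nat := count (pred1 Rt) s.
Definition nG (s : seq 'I_3) : nat := count (pred1 Dg) s.

Definition xpos (r : nat) (s : seq 'I_3) : int := ((nR s + r * nG s)%N)%:Z.
Definition ypos (n : nat) (s : seq 'I_3) : int := n%:Z - ((nD s + nG s)%N)%:Z.

Definition isSch (r n d : nat) (s : seq 'I_3) : bool :=
  [&& xpos r s == (r * n)%N%:Z, ypos n s == 0, nG s == (n - d)%N &
      [forall k : 'I_(size s).+1,
         xpos r (take k s) + r%:Z * ypos n (take k s) <= (r * n)%N%:Z]].

Fixpoint vstarts (r x : nat) (s : seq 'I_3) : seq nat :=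
  match s with
  | [::] => [::]
  | c :: s' => if c == Rt then vstarts r x.+1 s'
               else x :: vstarts r (if c == Dg then x + r else x)%N s'
  end.

(* a_i(alpha) for i = 1..n is nth 0 (vstarts r 0 s) (i-1) *)
Definition aire (r : nat) (s : seq 'I_3) : nat :=
  \sum_(i < size (vstarts r 0 s)) (r * i - nth 0%N (vstarts r 0 s) i)%N.

Notation "x %:F" := (@FracField.tofrac _ x) : ring_scope.

Definition qint (m : nat) : {poly int} := \sum_(i < m) 'X^i.
Definition qfact (m : nat) : {poly int} := \prod_(1 <= i < m.+1) qint i.
Definition qbinom (m k : nat) : {fraction {poly int}} :=
  (qfact m)%:F / ((qfact k)%:F * (qfact (m - k))%:F).
Definition qF : {fraction {poly int}} := ('X : {poly int})%:F.

From HB Require Import structures.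
From mathcomp Require Import all_boot all_order all_algebra.
From mathcomp Require Import fraction.
From mathcomp Require Import zify ring.
Import Order.TTheory GRing.Theory Num.Theory.
Set Implicit Arguments.
Unset Strict Implicit.
Unset Printing Implicit Defensive.

Local Open Scope ring_scope.

(* Symmetry of S(q,t) forces aire and dinv to have the same total over
   Sch^r_{n,d}, so the Laurent polynomial q^w Σ q^(aire - dinv) has mean
   exponent w: its derivative at q = 1 is w times its value at q = 1.
   For r = 2, n = 2, d = 1 the right-hand side is [4]_q = 1 + q + q^2 + q^3,
   with value 4 and derivative 6 at q = 1, and 4 w = 6 has no integer
   solution. *)

Lemma derivXn_horner1 (n : nat) : (('X^n : {poly int})^`()).[1] = n%:R.
Proof. by rewrite derivXn hornerMn hornerXn expr1n. Qed.

Section SumsOfMonomials.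

Variables (I : finType) (P : pred I).

Lemma horner1_sum_Xn (n : I -> nat) :
  (\sum_(i | P i) 'X^(n i) : {poly int}).[1] = #|P|%:R.
Proof.
rewrite horner_sum -sum1_card natr_sum.
by apply: eq_bigr => i _; rewrite hornerXn expr1n.
Qed.

Lemma deriv_horner1_sum_Xn (n : I -> nat) :
  (\sum_(i | P i) 'X^(n i) : {poly int})^`().[1] = \sum_(i | P i) (n i)%:R.
Proof. by rewrite raddf_sum horner_sum; apply: eq_bigr => i _; rewrite derivXn_horner1. Qed.

Lemma sum_exp_diff_eq0_of_bisymmetric (f g : I -> nat) :
  \sum_(i | P i) ('X^(f i))%:P * 'X^(g i)
    = \sum_(i | P i) ('X^(g i))%:P * 'X^(f i) :> {poly {poly int}} ->
  \sum_(i | P i) ((f i)%:Z - (g i)%:Z) = 0.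
Proof.
have eval (a b : nat) : (('X^a : {poly int})%:P * 'X^b).[1] = 'X^a.
  by rewrite hornerCM hornerXn expr1n mulr1.
move=> /(congr1 (fun p : {poly {poly int}} => p.[1])).
rewrite !horner_sum (eq_bigr _ (fun i _ => eval (f i) (g i))).
rewrite (eq_bigr _ (fun i _ => eval (g i) (f i))).
move=> /(congr1 (fun p => p^`().[1])); rewrite !deriv_horner1_sum_Xn => same.
rewrite sumrB -(eq_bigr _ (fun i _ => natz (f i))).
by rewrite -(eq_bigr _ (fun i _ => natz (g i))) same subrr.
Qed.

(* Multiplying by a large enough power q^K turns the Laurent identity into an
   identity of polynomials, whose value and derivative at 1 are compared. *)
Lemma moments_of_laurent_sum (w : int) (e : I -> int) (p : {poly int}) :
  qF ^ w * \sum_(i | P i) qF ^ e i = p%:F ->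
  p.[1] = #|P|%:R /\ p^`().[1] = w *+ #|P| + \sum_(i | P i) e i.
Proof.
move=> hp.
pose K := (\sum_(i | P i) absz (w + e i)%R)%N.
have shift_ge0 i : P i -> 0 <= K%:Z + (w + e i).
  move=> Pi; have : (absz (w + e i)%R <= K)%N by rewrite /K (bigD1 i Pi) leq_addr.
  lia.
have qF_neq0 : qF != 0 by rewrite tofrac_eq0 polyX_eq0.
have shifted : 'X^K * p = \sum_(i | P i) 'X^(absz (K%:Z + (w + e i))).
  apply/eqP; rewrite -tofrac_eq tofracM rmorph_sum rmorphXn -/qF -hp.
  rewrite mulrA (exprnP qF K) -expfzDr // mulr_sumr; apply/eqP/eq_bigr => i Pi.
  by rewrite -expfzDr // -addrA rmorphXn -/qF exprnP gez0_abs ?shift_ge0.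
have value := congr1 (horner^~ 1) shifted.
have slope := congr1 (fun q => q^`().[1]) shifted.
rewrite /= horner1_sum_Xn hornerM hornerXn expr1n mul1r in value.
rewrite /= deriv_horner1_sum_Xn derivM hornerD !hornerM derivXn_horner1 in slope.
rewrite hornerXn expr1n mul1r value in slope.
split=> //; apply: (@addrI _ (K%:R * #|P|%:R)); rewrite slope.
under eq_bigr => i Pi do rewrite natz gez0_abs ?shift_ge0 //.
by rewrite !big_split /= !sumr_const mulr_natr natz.
Qed.

End SumsOfMonomials.

Lemma horner1_qint (m : nat) : (qint m).[1] = m%:R.
Proof. by rewrite /qint (horner1_sum_Xn predT) card_ord. Qed.

Lemma deriv_horner1_qint (m : nat) : (qint m)^`().[1] = 'C(m, 2)%:R.
Proof.
rewrite /qint (deriv_horner1_sum_Xn predT) -natr_sum -bin2_sum.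
by rewrite big_mkord.
Qed.

Lemma qint_neq0 (m : nat) : (0 < m)%N -> qint m != 0.
Proof.
move=> m_gt0; apply/eqP => /(congr1 (horner^~ 1)) /eqP.
by rewrite /= horner1_qint horner0 pnatr_eq0 gtn_eqF.
Qed.

Lemma qfactS (m : nat) : qfact m.+1 = qfact m * qint m.+1.
Proof. by rewrite /qfact big_nat_recr. Qed.

Lemma rhs_r2_n2_d1 :
  (qint (1 * 2 + 1))%:F^-1 * qbinom 2 1 * qbinom (1 * 2 + 2) 2 = (qint 4)%:F.
Proof.
have cancel_ratio (F : fieldType) (b c e : F) :
  b != 0 -> c != 0 -> c^-1 * b * (b * c * e / (b * b)) = e.
  by move=> b_neq0 c_neq0; field; rewrite b_neq0 c_neq0.
rewrite /qbinom (_ : (1 * 2 + 1 = 3)%N) // (_ : (1 * 2 + 2 = 4)%N) //.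
rewrite !qfactS /qfact big_geq // !mul1r !tofracM.
have -> : (qint 1)%:F = 1 by rewrite /qint big_ord1 expr0 tofrac1.
by rewrite !mul1r divr1 cancel_ratio // tofrac_eq0 qint_neq0.
Qed.

Theorem mainTheorem1 :
  ~ exists dinv : forall r n d : nat, (n + r * d).-tuple 'I_3 -> nat,
      forall r n d : nat, (0 < r)%N -> (d <= n)%N ->
        (\sum_(a : (n + r * d).-tuple 'I_3 | isSch r n d a)
            ('X^(aire r a))%:P * 'X^(dinv r n d a)
         = \sum_(a : (n + r * d).-tuple 'I_3 | isSch r n d a)
            ('X^(dinv r n d a))%:P * 'X^(aire r a) :> {poly {poly int}})
        /\
        (exists w : int,
           qF ^ w * \sum_(a : (n + r * d).-tuple 'I_3 | isSch r n d a)
                       qF ^ ((aire r a)%:Z - (dinv r n d a)%:Z)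
           = (qint (d * r + 1))%:F^-1 * qbinom n d * qbinom (d * r + n) n).
Proof.
move=> [dinv H]; have [sym [w hw]] := H 2%N 2%N 1%N isT isT.
rewrite rhs_r2_n2_d1 in hw.
have [value slope] := moments_of_laurent_sum hw.
rewrite horner1_qint in value.
rewrite deriv_horner1_qint sum_exp_diff_eq0_of_bisymmetric // addr0 in slope.
rewrite -[w *+ _]mulr_natr -value (_ : 'C(4, 2) = 6%N) // in slope.
lia.
Qed.
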